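(* Let $\alpha\in\mathbb R^n$ be a unit vector and $a_1,\dots,a_r\in\mathbb R$ with $a_1^2+\dots+a_r^2\neq0$, and let $\Gamma=(a_1\alpha\ \cdots\ a_r\alpha)$, so that $\operatorname{tr}(X^T\Gamma)=\langle a_1e_1+\dots+a_re_r,\alpha\rangle$ for $X=(e_1\cdots e_r)$. Take $\kappa=0$. Then the equations $$\dot X=P-XP^TX,\qquad \dot P=PX^TP-\Gamma+X\Lambda,\qquad \Lambda=\tfrac12\left(-2P^TP+X^T\Gamma+\Gamma^TX\right)$$ on $T^*V(n,r)$ imply the matrix equations $$\frac{d}{dt}\tilde L(\lambda)=[\tilde L(\lambda),\tilde A(\lambda)],\qquad\lambda\in\mathbb R,$$ where, with $\Phi=PX^T-XP^T$ and $x=a_1e_1+\dots+a_re_r$, the matrices $\tilde L(\lambda),\tilde A(\lambda)\in so(n+1)$ are $$\tilde L(\lambda)=\begin{pmatrix}-\lambda\Phi & x+\lambda^2\alpha\\ -x^T-\lambda^2\alpha^T&0\end{pmatrix},\qquad \tilde A(\lambda)=\begin{pmatrix}-\Phi&\lambda\alpha\\-\lambda\alpha^T&0\end{pmatrix}.$$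
   Context: $V(n,r)=\{X\in M_{n,r}(\mathbb R):X^TX=\mathbf I_r\}$ with columns $e_1,\dots,e_r$, and $T^*V(n,r)$ is realized as the set of pairs $(X,P)$ of real $n\times r$ matrices with $X^TX=\mathbf I_r$, $X^TP+P^TX=0$. The given equations are the Hamiltonian flow of $\frac12\operatorname{tr}(P^TP)-\frac12\operatorname{tr}((XP^T)^2)+\operatorname{tr}(X^T\Gamma)$ (the pendulum with normal metric, $\kappa=0$). *)

From HB Require Import structures.
From mathcomp Require Import all_boot all_order all_algebra.
From mathcomp Require Import all_classical all_reals all_analysis.
Set Implicit Arguments. Unset Strict Implicit. Unset Printing Implicit Defensive.
Import Order.TTheory GRing.Theory Num.Theory.
Local Open Scope ring_scope.

Definition Phi (R : ringType) (n r : nat) (X P : 'M[R]_(n, r)) : 'M[R]_n :=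
  P *m X^T - X *m P^T.

(* Gamma = (a_1 alpha ... a_r alpha) = alpha a, with a the row vector (a_1..a_r) *)
Definition Gam (R : ringType) (n r : nat) (alpha : 'cV[R]_n) (a : 'rV[R]_r)
  : 'M[R]_(n, r) := alpha *m a.

(* x = a_1 e_1 + ... + a_r e_r = X a^T, with e_i the columns of X *)
Definition xvec (R : ringType) (n r : nat) (X : 'M[R]_(n, r)) (a : 'rV[R]_r)
  : 'cV[R]_n := X *m a^T.

Definition Lam (R : fieldType) (n r : nat) (X P G : 'M[R]_(n, r)) : 'M[R]_r :=
  2^-1 *: (- (2%:R *: (P^T *m P)) + X^T *m G + G^T *m X).

Definition Lt (R : ringType) (n r : nat) (alpha : 'cV[R]_n) (a : 'rV[R]_r)
  (lam : R) (X P : 'M[R]_(n, r)) : 'M[R]_(n + 1) :=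
  block_mx (- (lam *: Phi X P)) (xvec X a + lam ^+ 2 *: alpha)
           (- (xvec X a)^T - lam ^+ 2 *: alpha^T) (0 : 'M[R]_1).

Definition At (R : ringType) (n r : nat) (alpha : 'cV[R]_n)
  (lam : R) (X P : 'M[R]_(n, r)) : 'M[R]_(n + 1) :=
  block_mx (- Phi X P) (lam *: alpha) (- (lam *: alpha^T)) (0 : 'M[R]_1).

(** Along the flow, [Phi] and [x] evolve by [Phi' = x alpha^T - alpha x^T] and
    [x' = Phi x]: the first uses only that the Lagrange multiplier [Lambda] is
    symmetric, the second that the columns of [X] are orthonormal.  A block
    computation, using [Phi^T = -Phi], shows that the commutator
    [[L(lambda), A(lambda)]] is exactly the matrix of these derivatives. *)
From HB Require Import structures.
From mathcomp Require Import all_boot all_order all_algebra.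
From mathcomp Require Import all_classical all_reals all_analysis.
From mathcomp Require Import ring.
Import Order.TTheory GRing.Theory Num.Theory numFieldNormedType.Exports.
Local Open Scope ring_scope.
Local Open Scope classical_set_scope.

Section MatrixDerivative.
Context {R : realFieldType} {V : normedModType R}.
Variables (x v : V).

Lemma is_derive_mxP m n (M : V -> 'M[R]_(m, n)) (dM : 'M[R]_(m, n)) :
  is_derive x v M dM <-> forall i j, is_derive x v (fun y => M y i j) (dM i j).
Proof.
split=> [[dMx <-] i j | dMij].
  have dMijx : derivable (fun y => M y i j) x v by move/derivable_mxP: dMx.
  by apply: DeriveDef; rewrite // derive_mx // mxE.
have dMx : derivable M x v by apply/derivable_mxP => i j; case: (dMij i j).
apply: DeriveDef; rewrite // derive_mx //.
by apply/matrixP => i j; rewrite mxE derive_val.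
Qed.

Lemma is_derive_trmx m n (M : V -> 'M[R]_(m, n)) dM :
  is_derive x v M dM -> is_derive x v (fun y => (M y)^T) dM^T.
Proof.
move/is_derive_mxP=> dMij; apply/is_derive_mxP => i j; rewrite mxE.
by under eq_fun do rewrite mxE.
Qed.

Lemma is_derive_block_mx m1 m2 n1 n2 (A : V -> 'M[R]_(m1, n1))
    (B : V -> 'M[R]_(m1, n2)) (C : V -> 'M[R]_(m2, n1)) (D : V -> 'M[R]_(m2, n2))
    dA dB dC dD :
  is_derive x v A dA -> is_derive x v B dB ->
  is_derive x v C dC -> is_derive x v D dD ->
  is_derive x v (fun y => block_mx (A y) (B y) (C y) (D y)) (block_mx dA dB dC dD).
Proof.
move=> /is_derive_mxP dAij /is_derive_mxP dBij /is_derive_mxP dCij /is_derive_mxP dDij.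
apply/is_derive_mxP => i j; rewrite block_mxEh mxE.
under eq_fun do rewrite block_mxEh mxE.
by case: splitP => i' _; rewrite !mxE; under eq_fun do rewrite mxE;
  case: splitP => j' _.
Qed.

Lemma is_derive_mulmx m n p (A : V -> 'M[R]_(m, n)) (B : V -> 'M[R]_(n, p)) dA dB :
  is_derive x v A dA -> is_derive x v B dB ->
  is_derive x v (fun y => A y *m B y) (dA *m B x + A x *m dB).
Proof.
move=> /is_derive_mxP dAij /is_derive_mxP dBij; apply/is_derive_mxP => i j.
have -> : (fun y => (A y *m B y) i j) = \sum_(k < n) (fun y => A y i k * B y k j).
  by apply/funext => y; rewrite mxE fct_sumE.
rewrite !mxE -big_split /=; apply: is_derive_sum => k.
by rewrite addrC [dA i k * _]mulrC; apply: is_deriveM.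
Qed.

End MatrixDerivative.

Section LaxPair.
Variables (R : comNzRingType) (n r : nat).
Implicit Types (X P : 'M[R]_(n, r)) (alpha : 'cV[R]_n) (a : 'rV[R]_r).

Lemma trmx_Phi X P : (Phi X P)^T = - Phi X P.
Proof. by rewrite /Phi linearB /= !trmx_mul !trmxK opprB. Qed.

Lemma Lt_At_commutator alpha a lam X P :
  Lt alpha a lam X P *m At alpha lam X P - At alpha lam X P *m Lt alpha a lam X P
  = block_mx (- (lam *: (xvec X a *m alpha^T - alpha *m (xvec X a)^T)))
             (Phi X P *m xvec X a) (- (Phi X P *m xvec X a)^T) 0.
Proof.
rewrite /Lt /At; have := trmx_Phi X P.
move: (Phi X P) (xvec X a) => F y FT.
have yTa : y^T *m alpha = alpha^T *m y.
  by rewrite [LHS]mx11_scalar -tr_scalar_mx -mx11_scalar trmx_mul trmxK.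
rewrite !mulmx_block opp_block_mx add_block_mx trmx_mul FT.
congr block_mx; rewrite !(mulmxN, mulNmx, mulmxDl, mulmxDr, mulmxBl, mulmxBr,
  mul0mx, mulmx0, addr0, subr0) -!(scalemxAl, scalemxAr) ?yTa;
  by apply/matrixP => i j; rewrite !mxE; ring.
Qed.

End LaxPair.

Section Flow.
Variables (R : fieldType) (n r : nat).
Implicit Types (X P G : 'M[R]_(n, r)) (alpha : 'cV[R]_n) (a : 'rV[R]_r).

Lemma trmx_Lam X P G : (Lam X P G)^T = Lam X P G.
Proof.
rewrite /Lam linearZ linearD linearD /= linearN linearZ /= !trmx_mul !trmxK.
by rewrite -addrA [_ *m X + _]addrC addrA.
Qed.

Lemma Phi_flow alpha a X P :
  (P *m X^T *m P - Gam alpha a + X *m Lam X P (Gam alpha a)) *m X^T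
    + P *m (P - X *m P^T *m X)^T
  - ((P - X *m P^T *m X) *m P^T
    + X *m (P *m X^T *m P - Gam alpha a + X *m Lam X P (Gam alpha a))^T)
  = xvec X a *m alpha^T - alpha *m (xvec X a)^T.
Proof.
rewrite /xvec /Gam !linearD !linearN /= !trmx_mul !trmxK trmx_Lam.
rewrite !(mulmxDl, mulmxDr, mulmxBl, mulmxBr, mulmxN, mulNmx, mulmxA).
by apply/matrixP => i j; rewrite !mxE; ring.
Qed.

Lemma xvec_flow a X P : X^T *m X = 1%:M ->
  (P - X *m P^T *m X) *m a^T = Phi X P *m xvec X a.
Proof. by move=> XX; rewrite /Phi /xvec !mulmxBl !mulmxA -(mulmxA P) XX mulmx1. Qed.

End Flow.

Lemma is_derive_Lt {R : realFieldType} {V : normedModType R} {n r : nat}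
    (alpha : 'cV[R]_n) (a : 'rV[R]_r) lam {X P : V -> 'M[R]_(n, r)} {x v : V} {dX dP} :
  is_derive x v X dX -> is_derive x v P dP ->
  is_derive x v (fun y => Lt alpha a lam (X y) (P y))
    (block_mx (- (lam *: (dP *m (X x)^T + P x *m dX^T
                          - (dX *m (P x)^T + X x *m dP^T))))
              (dX *m a^T) (- (dX *m a^T)^T) 0).
Proof.
move=> HX HP; rewrite /Lt /Phi /xvec.
have Hx : is_derive x v (fun y => X y *m a^T) (dX *m a^T).
  by rewrite -[dX *m _]addr0 -(mulmx0 _ (X x)); apply: is_derive_mulmx.
apply: is_derive_block_mx.
- apply/is_deriveN/is_deriveZ/is_deriveB; apply: is_derive_mulmx => //;
    exact: is_derive_trmx.
- by rewrite -[dX *m _]addr0; apply: is_deriveD.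
- rewrite -[X in is_derive _ _ _ X]subr0; apply: is_deriveB.
  exact/is_deriveN/is_derive_trmx.
Qed.

Theorem theorem5 (R : realType) (n r : nat) (alpha : 'cV[R]_n) (a : 'rV[R]_r)
  (T : set R) (X P : R -> 'M[R]_(n, r)) :
  alpha^T *m alpha = 1%:M ->
  \sum_(i < r) a 0 i ^+ 2 != 0 ->
  open T ->
  (forall t, T t -> (X t)^T *m X t = 1%:M /\ (X t)^T *m P t + (P t)^T *m X t = 0) ->
  (forall t, T t -> derivable X t 1 /\ derivable P t 1) ->
  (forall t, T t -> X^`() t = P t - X t *m (P t)^T *m X t) ->
  (forall t, T t -> P^`() t = P t *m (X t)^T *m P t - Gam alpha a
                              + X t *m Lam (X t) (P t) (Gam alpha a)) ->
  forall (lam : R) (t : R), T t ->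
    derivable (fun s => Lt alpha a lam (X s) (P s)) t 1 /\
    (fun s => Lt alpha a lam (X s) (P s))^`() t =
      Lt alpha a lam (X t) (P t) *m At alpha lam (X t) (P t)
      - At alpha lam (X t) (P t) *m Lt alpha a lam (X t) (P t).
Proof.
move=> _ _ _ orth der Xflow Pflow lam t Tt.
have [dX dP] := der t Tt; have [XX _] := orth t Tt.
have HX := derivableP dX; have HP := derivableP dP.
rewrite -derive1E Xflow // in HX; rewrite -derive1E Pflow // in HP.
have HL := is_derive_Lt alpha a lam HX HP.
split; first by case: HL.
by rewrite derive1E derive_val Phi_flow xvec_flow // Lt_At_commutator.
Qed.
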